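(* Let $\lambda_1\ge\lambda_2\ge 2$ and $h_1\ge h_2\ge2$ be integers, let $h_1\le m\le h_1+h_2+\lambda_2-3$, and set $m'=\lambda_1+\lambda_2+h_1+h_2-3-m$. Then $$\frac{\lambda_1-\lambda_2+1}{m-h_2+1}\binom{\lambda_1+h_1-2}{m-h_2}\binom{\lambda_2+h_1-3}{m-h_2}\binom{m-h_2}{m-h_1}\binom{\lambda_2+h_2-4}{h_2-2}\binom{\lambda_1+h_2-3}{h_2-2}\frac{1}{\binom{h_1-1}{h_2-2}}$$ $$=\frac{h_1-h_2+1}{m'-\lambda_2+1}\binom{h_1+\lambda_1-2}{m'-\lambda_2}\binom{h_2+\lambda_1-3}{m'-\lambda_2}\binom{m'-\lambda_2}{m'-\lambda_1}\binom{h_1+\lambda_2-3}{\lambda_2-2}\binom{h_2+\lambda_2-4}{\lambda_2-2}\frac{1}{\binom{\lambda_1-1}{\lambda_2-2}}.$$ *)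

From HB Require Import structures.
From mathcomp Require Import all_boot all_order all_algebra.

(* Writing l2 = b + 2, h2 = q + 2, l1 = l2 + d, h1 = h2 + e, m = h1 + k and
   m' = l1 + j (so that k + j = b + q + 1), each side becomes a ratio of
   factorials, and the side for (l1, l2, h1, h2, m) turns into the side for
   (h1, h2, l1, l2, m') under the exchange (b, d, k) <-> (q, e, j).  The common
   closed form [fact_form] is visibly invariant under that exchange. *)
From HB Require Import structures.
From mathcomp Require Import all_boot all_order all_algebra.
From mathcomp Require Import zify ring.
Import GRing.Theory Num.Theory.
Local Open Scope ring_scope.

Lemma natr_fact_neq0 (R : numDomainType) (n : nat) : n`!%:R != 0 :> R.
Proof. by rewrite pnatr_eq0 -lt0n fact_gt0. Qed.

Lemma natr_binD (R : numFieldType) (x y : nat) :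
  'C(x + y, x)%:R = (x + y)`!%:R / (x`!%:R * y`!%:R) :> R.
Proof.
have := bin_fact (leq_addr y x); rewrite addKn => <-.
by rewrite !natrM mulfK // mulf_neq0 // natr_fact_neq0.
Qed.

Definition bin_prod (l1 l2 h1 h2 m : nat) : rat :=
  (l1 - l2 + 1)%N%:R / (m - h2 + 1)%N%:R
    * 'C(l1 + h1 - 2, m - h2)%:R * 'C(l2 + h1 - 3, m - h2)%:R
    * 'C(m - h2, m - h1)%:R * 'C(l2 + h2 - 4, h2 - 2)%:R
    * 'C(l1 + h2 - 3, h2 - 2)%:R / 'C(h1 - 1, h2 - 2)%:R.

Definition fact_form (b q d e k j : nat) : rat :=
  (d + 1)%N%:R * (e + 1)%N%:R * (b + q)`!%:R * (b + q + d + e + 2)`!%:R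
    * (b + q + d + 1)`!%:R * (b + q + e + 1)`!%:R
  / (b`!%:R * q`!%:R * k`!%:R * j`!%:R * (b + d + 1)`!%:R * (q + e + 1)`!%:R
     * (e + k + 1)`!%:R * (d + j + 1)`!%:R).

Lemma fact_formC (b q d e k j : nat) : fact_form b q d e k j = fact_form q b e d j k.
Proof.
by rewrite /fact_form (addnC q b) (addnAC (b + q) e d); congr (_ / _); ring.
Qed.

Lemma bin_prodE {b q d e k j : nat} : (k + j = q + b + 1)%N ->
  bin_prod (b + 2 + d) (b + 2) (q + 2 + e) (q + 2) (q + 2 + e + k)
  = fact_form b q d e k j.
Proof.
move=> kj; rewrite /bin_prod /fact_form.
have -> : 'C(b + 2 + d + (q + 2 + e) - 2, q + 2 + e + k - (q + 2))
  = 'C(e + k + (d + j + 1), e + k) by congr binomial; lia.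
have -> : 'C(b + 2 + (q + 2 + e) - 3, q + 2 + e + k - (q + 2))
  = 'C(e + k + j, e + k) by congr binomial; lia.
have -> : 'C(q + 2 + e + k - (q + 2), q + 2 + e + k - (q + 2 + e))
  = 'C(k + e, k) by congr binomial; lia.
have -> : 'C(b + 2 + (q + 2) - 4, q + 2 - 2) = 'C(q + b, q)
  by congr binomial; lia.
have -> : 'C(b + 2 + d + (q + 2) - 3, q + 2 - 2) = 'C(q + (b + d + 1), q)
  by congr binomial; lia.
have -> : 'C(q + 2 + e - 1, q + 2 - 2) = 'C(q + (e + 1), q)
  by congr binomial; lia.
rewrite !natr_binD.
have -> : (b + 2 + d - (b + 2) + 1 = d + 1)%N by lia.
have -> : (q + 2 + e + k - (q + 2) + 1 = e + k + 1)%N by lia.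
have -> : (e + k + (d + j + 1) = b + q + d + e + 2)%N by lia.
have -> : (e + k + j = b + q + e + 1)%N by lia.
have -> : (q + (b + d + 1) = b + q + d + 1)%N by lia.
rewrite (addnC k e) (addnC q b) (addnA q e 1).
rewrite !addn1 !addn2 !factS; field.
by rewrite !natr_fact_neq0 -!natrD -[1]/(1%:R) -!natrD !pnatr_eq0.
Qed.

Theorem proposition4p2 (l1 l2 h1 h2 m : nat)
  (Hl : (l2 <= l1)%N) (Hl2 : (2 <= l2)%N)
  (Hh : (h2 <= h1)%N) (Hh2 : (2 <= h2)%N)
  (Hm1 : (h1 <= m)%N) (Hm2 : (m <= h1 + h2 + l2 - 3)%N) :
  let m' := (l1 + l2 + h1 + h2 - 3 - m)%N in
  ((l1 - l2 + 1)%N%:R / (m - h2 + 1)%N%:R : rat)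
    * 'C(l1 + h1 - 2, m - h2)%:R * 'C(l2 + h1 - 3, m - h2)%:R
    * 'C(m - h2, m - h1)%:R * 'C(l2 + h2 - 4, h2 - 2)%:R
    * 'C(l1 + h2 - 3, h2 - 2)%:R / 'C(h1 - 1, h2 - 2)%:R
  = ((h1 - h2 + 1)%N%:R / (m' - l2 + 1)%N%:R : rat)
    * 'C(h1 + l1 - 2, m' - l2)%:R * 'C(h2 + l1 - 3, m' - l2)%:R
    * 'C(m' - l2, m' - l1)%:R * 'C(h1 + l2 - 3, l2 - 2)%:R
    * 'C(h2 + l2 - 4, l2 - 2)%:R / 'C(l1 - 1, l2 - 2)%:R.
Proof.
move=> m'.
rewrite [X in _ = X / _]mulrAC -[LHS]/(bin_prod l1 l2 h1 h2 m).
rewrite -[RHS]/(bin_prod h1 h2 l1 l2 m') {}/m'.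
have [b Eb] : exists b, l2 = (b + 2)%N by exists (l2 - 2)%N; lia.
have [q Eq] : exists q, h2 = (q + 2)%N by exists (h2 - 2)%N; lia.
have [d Ed] : exists d, l1 = (b + 2 + d)%N by exists (l1 - l2)%N; lia.
have [e Ee] : exists e, h1 = (q + 2 + e)%N by exists (h1 - h2)%N; lia.
have [k Ek] : exists k, m = (q + 2 + e + k)%N by exists (m - h1)%N; lia.
subst.
have [j kj] : exists j, (k + j = q + b + 1)%N by exists (q + b + 1 - k)%N; lia.
have -> : (b + 2 + d + (b + 2) + (q + 2 + e) + (q + 2) - 3 - (q + 2 + e + k)
  = b + 2 + d + j)%N by lia.
have jk : (j + k = b + q + 1)%N by lia.
by rewrite (bin_prodE kj) (bin_prodE jk) fact_formC.
Qed.
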